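(* For every $n\in\mathbb{N}$, the number of labeled split graphs with vertex set $[n]$ whose questioning set has size at least $2$ equals $$2\sum_{q=2}^{n}\sum_{c=0}^{n-q}\binom{n}{q}\binom{n-q}{c}\big(2^{\,n-c-q}-1\big)^{c},$$ with the convention $0^0=1$.
   Context: $[n]=\{1,\dots,n\}$; labeled graphs on $[n]$ are distinct if their edge sets differ. A split partition of a graph $G$ is an ordered pair $(C',I')$ of disjoint sets (possibly empty) with $C'\cup I'=V(G)$, $C'$ a clique and $I'$ an independent set; $G$ is a split graph if it has a split partition. The questioning set of a split graph is the set of vertices $v$ for which there is a split partition with $v\in C'$ and a split partition with $v\in I'$. *)

(* Labeled graphs on [n] = vertex type 'I_n (vertices 0..n-1),
   a graph is identified with its edge set: a set of 2-element subsets. *)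
From mathcomp Require Import all_boot.
Set Implicit Arguments. Unset Strict Implicit. Unset Printing Implicit Defensive.

Section Split.
Variable n : nat.
Implicit Types (G : {set {set 'I_n}}) (C I : {set 'I_n}).

Definition is_graph G : bool := [forall e in G, #|e| == 2].

Definition adj G (x y : 'I_n) : bool := (x != y) && ([set x; y] \in G).

Definition is_clique G C : bool :=
  [forall x in C, forall y in C, (x != y) ==> adj G x y].

Definition is_indep G I : bool :=
  [forall x in I, forall y in I, ~~ adj G x y].

Definition split_partition G C I : bool :=
  [&& [disjoint C & I], C :|: I == [set: 'I_n], is_clique G C & is_indep G I].

Definition is_split G : bool := [exists C, exists I, split_partition G C I].

Definition questioning_set G : {set 'I_n} :=
  [set v | [exists C, exists I, split_partition G C I && (v \in C)]
        && [exists C, exists I, split_partition G C I && (v \in I)]].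
End Split.

From mathcomp Require Import all_boot.
Set Implicit Arguments. Unset Strict Implicit. Unset Printing Implicit Defensive.

(* A split partition is determined by its clique side C (the independent side
   is ~: C), so the questioning set Q of G consists of the vertices lying in
   some clique side and outside another one.  Fixing a clique side C of maximum
   size, the questioning vertices inside C are exactly the "loose" ones (no
   neighbour outside C), and a questioning vertex outside C sees all of C but
   one loose vertex; hence Q is either a clique or an independent set.
   Complementation swaps these two cases, so it suffices to count twice the
   graphs whose questioning set is a clique.  Such a graph, with |Q| >= 2, is
   described bijectively by the data (Q, A, f): A is the set of vertices outside
   Q adjacent to Q (then Q :|: A is the maximum clique side), and f assigns to
   each a in A its nonempty set of neighbours outside Q :|: A.  Summing the
   number (2 ^ (n - |Q| - |A|) - 1) ^ |A| of such f over Q and A, grouped by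
   size, gives the formula. *)

Lemma card_nonempty_subsets (T : finType) (D : {set T}) :
  #|[pred S : {set T} | (S \subset D) && (S != set0)]| = 2 ^ #|D| - 1.
Proof.
rewrite -card_powerset (cardsD1 set0) powersetE sub0set add1n subn1 /=.
by apply: eq_card => S; rewrite !inE andbC.
Qed.

Lemma sum_subsets (T : finType) (D : {set T}) (g : nat -> nat) :
  \sum_(A : {set T} | A \subset D) g #|A| = \sum_(c < #|D|.+1) 'C(#|D|, c) * g c.
Proof.
have leD (A : {set T}) : A \subset D -> #|A| < #|D|.+1.
  by move=> sAD; rewrite ltnS subset_leq_card.
rewrite (partition_big (fun A : {set T} => inord #|A| : 'I_#|D|.+1) predT) //=.
apply: eq_bigr => c _; rewrite (eq_bigr (fun _ => g c)); last first.
  by move=> A /andP[sAD /eqP <-]; rewrite inordK ?leD.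
rewrite sum_nat_const -cards_draws; congr (_ * _).
apply: eq_card => A; rewrite inE -topredE /=; case sAD: (A \subset D) => //=.
apply/eqP/eqP => [<-|eAc]; first by rewrite inordK ?leD.
by apply: val_inj; rewrite /= inordK ?leD.
Qed.

Section SplitGraphs.
Variable n : nat.
Notation V := 'I_n.
Notation graph := {set {set V}}.
Notation QS := questioning_set.
Implicit Types (G : graph) (C I Q A : {set V}) (x y z u v w : V).

Lemma adj_sym G x y : adj G x y = adj G y x.
Proof. by rewrite /adj eq_sym setUC. Qed.

Lemma adj_irr G x : adj G x x = false.
Proof. by rewrite /adj eqxx. Qed.

Lemma adj_neq G x y : adj G x y -> x != y.
Proof. by case/andP. Qed.

Lemma graph_ext G G' : is_graph G -> is_graph G' ->
  (forall u v, adj G u v = adj G' u v) -> G = G'.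
Proof.
move=> /forall_inP gG /forall_inP gG' eadj; apply/setP => e.
wlog suff: G G' gG gG' eadj / e \in G -> e \in G'.
  by move=> W; apply/idP/idP; apply: W => // u v; rewrite eadj.
move=> eG; have /cards2P[x [y [nxy exy]]] := gG e eG.
have : adj G x y by rewrite /adj nxy -exy.
by rewrite eadj => /andP[_]; rewrite exy.
Qed.

Lemma cliqueP G C :
  reflect (forall x y, x \in C -> y \in C -> x != y -> adj G x y) (is_clique G C).
Proof.
apply: (iffP forall_inP) => [cC x y xC yC | cC x xC].
  by move/forall_inP: (cC x xC) => /(_ y yC) /implyP; apply.
by apply/forall_inP => y yC; apply/implyP; apply: cC.
Qed.

Lemma indepP G I :
  reflect (forall x y, x \in I -> y \in I -> ~~ adj G x y) (is_indep G I).
Proof.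
apply: (iffP forall_inP) => [iI x y xI yI | iI x xI].
  by move/forall_inP: (iI x xI) => /(_ y yI).
by apply/forall_inP => y yI; apply: iI.
Qed.

Lemma clique_indep_meet G C I x z : is_clique G C -> is_indep G I ->
  x \in C -> z \in C -> x \in I -> z \in I -> x = z.
Proof.
move=> /cliqueP cC /indepP iI xC zC xI zI; apply/eqP/negPn/negP => nxz.
by have := iI x z xI zI; rewrite cC.
Qed.

(* A split partition (C, I) is determined by its clique side C, with I = ~: C;
   we call C a clique side of G. *)
Definition clique_side G C := is_clique G C && is_indep G (~: C).

Lemma clique_sideP G C : reflect
  ((forall x y, x \in C -> y \in C -> x != y -> adj G x y) /\
   (forall x y, x \notin C -> y \notin C -> ~~ adj G x y)) (clique_side G C).
Proof.
apply: (iffP andP) => [[/cliqueP cC /indepP iC] | [cC iC]]; split => //.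
- by move=> x y xC yC; apply: iC; rewrite inE.
- exact/cliqueP.
- by apply/indepP => x y; rewrite !inE; apply: iC.
Qed.

Lemma split_partitionE G C I :
  split_partition G C I = (I == ~: C) && clique_side G C.
Proof.
rewrite /split_partition /clique_side.
apply/and4P/andP => [[dCI /eqP CIT cC iI] | [/eqP-> /andP[cC iC]]].
  suff eI : I = ~: C by rewrite -eI eqxx; split => //; apply/andP.
  apply/setP => v; rewrite inE.
  have /setUP[vC | vI] : v \in C :|: I by rewrite CIT inE.
    by rewrite vC (disjointFr dCI vC).
  by rewrite vI (disjointFl dCI vI).
by split => //; rewrite ?setUCr // -setI_eq0 setICr.
Qed.

Lemma exists_split_partition G (P : {set V} -> {set V} -> bool) :
  [exists C, exists I, split_partition G C I && P C I] =
  [exists C, clique_side G C && P C (~: C)].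
Proof.
apply/existsP/existsP => [[C /existsP[I]] | [C /andP[sC PC]]].
  by rewrite split_partitionE => /andP[/andP[/eqP-> sC] PC]; exists C; rewrite sC.
by exists C; apply/existsP; exists (~: C); rewrite split_partitionE eqxx sC.
Qed.

Lemma is_splitE G : is_split G = [exists C, clique_side G C].
Proof.
have := exists_split_partition G (fun _ _ => true).
under eq_existsb do under eq_existsb do rewrite andbT.
by under [in RHS]eq_existsb do rewrite andbT.
Qed.

Lemma questioningE G v : (v \in QS G) =
  [exists C, clique_side G C && (v \in C)] &&
  [exists C, clique_side G C && (v \notin C)].
Proof.
rewrite inE (exists_split_partition G (fun C _ => v \in C)).
rewrite (exists_split_partition G (fun _ I => v \in I)).
by congr (_ && _); apply: eq_existsb => C; rewrite in_setC.
Qed.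

Lemma clique_side_add G C y : clique_side G C -> y \notin C ->
  (forall z, z \in C -> adj G y z) -> clique_side G (y |: C).
Proof.
move=> /clique_sideP[cC iC] yC yfull; apply/clique_sideP; split.
  move=> a b; rewrite !in_setU1.
  case/predU1P => [->|aC]; case/predU1P => [->|bC]; rewrite ?eqxx //.
  - by move=> _; apply: yfull.
  - by move=> _; rewrite adj_sym; apply: yfull.
  - exact: cC.
by move=> a b; rewrite !in_setU1 !negb_or => /andP[_ aC] /andP[_ bC]; apply: iC.
Qed.

Lemma clique_side_del G C x : clique_side G C -> x \in C ->
  (forall y, y \notin C -> ~~ adj G x y) -> clique_side G (C :\ x).
Proof.
move=> /clique_sideP[cC iC] xC xloose; apply/clique_sideP; split.
  by move=> a b; rewrite !in_setD1 => /andP[_ aC] /andP[_ bC]; apply: cC.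
move=> a b; rewrite !in_setD1.
case/nandP => [/negbNE/eqP->|aC]; case/nandP => [/negbNE/eqP->|bC].
- by rewrite adj_irr.
- exact: xloose.
- by rewrite adj_sym; apply: xloose.
- exact: iC.
Qed.

Lemma max_clique_side G : is_split G ->
  exists2 C, clique_side G C & forall C', clique_side G C' -> #|C'| <= #|C|.
Proof.
rewrite is_splitE => /existsP[C0 sC0].
by case: (arg_maxnP (fun C => #|C|) sC0) => C; exists C.
Qed.

Definition loose G C := [set x in C | [forall y, (y \notin C) ==> ~~ adj G x y]].

Lemma looseP G C x :
  reflect (x \in C /\ forall y, y \notin C -> ~~ adj G x y) (x \in loose G C).
Proof.
rewrite inE; apply: (iffP andP) => [[xC /forallP xl] | [xC xl]]; split => //.
  by move=> y yC; move/implyP: (xl y); apply.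
by apply/forallP => y; apply/implyP; apply: xl.
Qed.

Lemma clique_sides_meet G C C' x z : clique_side G C -> clique_side G C' ->
  x \in C -> z \in C -> x \notin C' -> z \notin C' -> x = z.
Proof.
move=> /andP[cC _] /andP[_ iC'] xC zC xC' zC'.
by apply: (clique_indep_meet cC iC'); rewrite // inE.
Qed.

Section MaximumCliqueSide.
Variables (G : graph) (C : {set V}).
Hypothesis sC : clique_side G C.
Hypothesis maxC : forall C', clique_side G C' -> #|C'| <= #|C|.

(* By maximality, no vertex outside C sees all of C (it could join C). *)
Lemma no_full_outside y : y \notin C -> ~ (forall z, z \in C -> adj G y z).
Proof.
move=> yC yfull; have := maxC (clique_side_add sC yC yfull).
by rewrite cardsU1 yC ltnn.
Qed.

(* A loose vertex can be moved to the independent side, so it is questioning. *)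
Lemma loose_questioning : loose G C \subset QS G.
Proof.
apply/subsetP => x /looseP[xC xl]; rewrite questioningE.
apply/andP; split; apply/existsP; first by exists C; rewrite sC xC.
by exists (C :\ x); rewrite (clique_side_del sC xC xl) in_setD1 eqxx.
Qed.

(* A questioning x \in C is missed by some clique side C'.  A neighbour y of x
   outside C must lie in C', and so must every vertex of C other than x (two
   clique sides differ by at most one vertex); then y would see all of C. *)
Lemma questioning_in_loose x : x \in QS G -> x \in C -> x \in loose G C.
Proof.
rewrite questioningE => /andP[_ /existsP[C' /andP[sC' xC']]] xC.
have /clique_sideP[cC' iC'] := sC'.
apply/looseP; split => // y yC; apply/negP => axy.
have yC' : y \in C'.
  by apply/negPn/negP => yC'; have := iC' x y xC' yC'; rewrite axy.
apply: (no_full_outside yC) => z zC.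
have [->|nzx] := eqVneq z x; first by rewrite adj_sym.
have zC' : z \in C'.
  apply/negPn/negP => zC'; move/eqP: nzx; apply.
  exact: (clique_sides_meet sC sC' zC xC zC' xC').
by apply: cC' => //; apply: contraTneq zC => <-.
Qed.

(* A questioning y outside C lies in some clique side C'; exactly one w \in C
   is missed by C', y sees the rest of C, and w is loose: a neighbour u of w
   outside C would lie in C' :\: C = [set y], forcing y to see all of C. *)
Lemma questioning_outside y : y \in QS G -> y \notin C ->
  exists2 w, w \in loose G C & forall z, z \in C -> z != w -> adj G y z.
Proof.
rewrite questioningE => /andP[/existsP[C' /andP[sC' yC']] _] yC.
have /clique_sideP[cC' iC'] := sC'.
have adj_y z : z \in C -> z \in C' -> adj G y z.
  by move=> zC zC'; apply: cC' => //; apply: contraTneq zC => <-.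
have [w /andP[wC wC']] : exists w, (w \in C) && (w \notin C').
  have [/existsP //|/existsPn CC'] := boolP [exists w, (w \in C) && (w \notin C')].
  exfalso; apply: (no_full_outside yC) => z zC; apply: adj_y => //.
  by have := CC' z; rewrite zC /= negbK.
have CwC' z : z \in C -> z != w -> z \in C'.
  move=> zC /eqP nzw; apply/negPn/negP => zC'; apply: nzw.
  exact: (clique_sides_meet sC sC' zC wC zC' wC').
have adj_yw z : z \in C -> z != w -> adj G y z by move=> zC /(CwC' z zC); apply: adj_y.
exists w => //; apply/looseP; split => // u uC; apply/negP => awu.
have [euy|nuy] := eqVneq u y.
  apply: (no_full_outside yC) => z zC; have [->|nzw] := eqVneq z w.
    by rewrite adj_sym -euy.
  exact: adj_yw.
have uC' : u \notin C'.
  apply/negP => uC'; move/eqP: nuy; apply.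
  by apply: (clique_sides_meet sC' sC uC' yC' uC yC).
by have := iC' w u wC' uC'; rewrite awu.
Qed.
End MaximumCliqueSide.

Lemma loose_missed G C y w u : y \notin C ->
  (forall z, z \in C -> z != w -> adj G y z) -> u \in loose G C -> u = w.
Proof.
move=> yC yfull /looseP[uC ul]; apply/eqP/negPn/negP => nuw.
by have := ul y yC; rewrite adj_sym yfull.
Qed.

(* The questioning set of a split graph is a clique or an independent set:
   either it lies inside a maximum clique side C, or some questioning vertex y
   lies outside C, and then at most one questioning vertex lies in C. *)
Lemma questioning_clique_or_indep G :
  is_split G -> is_clique G (QS G) || is_indep G (QS G).
Proof.
case/max_clique_side => C sC maxC; have /clique_sideP[cC iC] := sC.
have [QC|] := boolP (QS G \subset C).
  by apply/orP; left; apply/cliqueP => x y /(subsetP QC) xC /(subsetP QC); apply: cC.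
case/subsetPn => y yQ yC; have [w _ yfull] := questioning_outside sC maxC yQ yC.
have onlyw u : u \in QS G -> u \in C -> u = w.
  by move=> uQ uC; apply: (loose_missed yC yfull); apply: questioning_in_loose.
apply/orP; right; apply/indepP => u v uQ vQ.
have [uC|uC] := boolP (u \in C); have [vC|vC] := boolP (v \in C).
- by rewrite (onlyw u uQ uC) (onlyw v vQ vC) adj_irr.
- by case/looseP: (questioning_in_loose sC maxC uQ uC) => _; apply.
- by rewrite adj_sym; case/looseP: (questioning_in_loose sC maxC vQ vC) => _; apply.
- exact: iC.
Qed.

Lemma questioning_clique_sub G C : clique_side G C ->
  (forall C', clique_side G C' -> #|C'| <= #|C|) ->
  is_clique G (QS G) -> QS G \subset C.
Proof.
move=> sC maxC /cliqueP cQ; apply/subsetP => y yQ; apply/negPn/negP => yC.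
have [w wl yfull] := questioning_outside sC maxC yQ yC.
have wQ : w \in QS G by apply: (subsetP (loose_questioning sC)).
have /looseP[wC wsees] := wl.
have nyw : y != w by apply: contraTneq wC => <-.
by have := wsees y yC; rewrite adj_sym cQ.
Qed.

Definition compl G : graph := [set e : {set V} | (#|e| == 2) && (e \notin G)].

Lemma adj_compl G u v : adj (compl G) u v = (u != v) && ~~ adj G u v.
Proof. by rewrite /adj inE cards2; case: (eqVneq u v). Qed.

Lemma graph_compl G : is_graph (compl G).
Proof. by apply/forall_inP => e; rewrite inE => /andP[]. Qed.

Lemma complK G : is_graph G -> compl (compl G) = G.
Proof.
move=> gG; apply: graph_ext => //; first exact: graph_compl.
move=> u v; rewrite !adj_compl negb_and.
by case: (eqVneq u v) => [->|_]; rewrite ?adj_irr ?negbK.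
Qed.

Lemma clique_compl G Q : is_clique (compl G) Q = is_indep G Q.
Proof.
apply/cliqueP/indepP => [cQ x y xQ yQ | iQ x y xQ yQ nxy].
  have [->|nxy] := eqVneq x y; first by rewrite adj_irr.
  by have := cQ x y xQ yQ nxy; rewrite adj_compl nxy.
by rewrite adj_compl nxy iQ.
Qed.

Lemma indep_compl G Q : is_indep (compl G) Q = is_clique G Q.
Proof.
apply/indepP/cliqueP => [iQ x y xQ yQ nxy | cQ x y xQ yQ].
  by have := iQ x y xQ yQ; rewrite adj_compl nxy negbK.
have [->|nxy] := eqVneq x y; first by rewrite adj_irr.
by rewrite adj_compl nxy negbK cQ.
Qed.

Lemma clique_side_compl G C : clique_side (compl G) C = clique_side G (~: C).
Proof. by rewrite /clique_side clique_compl indep_compl setCK andbC. Qed.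

Lemma split_compl G : is_split (compl G) = is_split G.
Proof.
rewrite !is_splitE; apply/existsP/existsP => [[C sC]|[C sC]].
  by exists (~: C); rewrite -clique_side_compl.
by exists (~: C); rewrite clique_side_compl setCK.
Qed.

Lemma questioning_compl G : QS (compl G) = QS G.
Proof.
have side_compl (P : pred {set V}) :
    [exists C, clique_side (compl G) C && P C] =
    [exists C, clique_side G C && P (~: C)].
  apply/existsP/existsP => [[C /andP[sC PC]] | [C /andP[sC PC]]].
    by exists (~: C); rewrite -clique_side_compl setCK sC.
  by exists (~: C); rewrite clique_side_compl setCK sC.
apply/setP => v; rewrite !questioningE !side_compl andbC.
by congr (_ && _); apply: eq_existsb => C; rewrite in_setC ?negbK.
Qed.

Definition graph_of (r : rel V) : graph :=
  [set e | [exists x, exists y, (e == [set x; y]) && r x y]].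

Lemma adj_graph_of (r : rel V) u v : irreflexive r -> symmetric r ->
  adj (graph_of r) u v = r u v.
Proof.
move=> irr sym; rewrite /adj inE.
apply/andP/idP => [[nuv /existsP[x /existsP[y /andP[/eqP exy rxy]]]] | ruv].
  have ux : u \in [set x; y] by rewrite -exy set21.
  have vx : v \in [set x; y] by rewrite -exy set22.
  move: ux vx nuv; rewrite !inE => /orP[]/eqP-> /orP[]/eqP->; rewrite ?eqxx //.
  by rewrite sym.
split; first by apply: contraTneq ruv => ->; rewrite irr.
by apply/existsP; exists u; apply/existsP; exists v; rewrite eqxx ruv.
Qed.

Lemma graph_graph_of (r : rel V) : irreflexive r -> is_graph (graph_of r).
Proof.
move=> irr; apply/forall_inP => e; rewrite inE.
case/existsP=> x /existsP[y /andP[/eqP-> rxy]].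
by rewrite cards2; case: (eqVneq x y) rxy => [->|//]; rewrite irr.
Qed.

Definition attached G := [set v | (v \notin QS G) && [exists q in QS G, adj G v q]].

Definition build_rel Q A (f : {ffun V -> {set V}}) : rel V := fun u v =>
  (u != v) && [|| (u \in Q :|: A) && (v \in Q :|: A), v \in f u | u \in f v].

Lemma build_rel_irr Q A f : irreflexive (build_rel Q A f).
Proof. by move=> u; rewrite /build_rel eqxx. Qed.

Lemma build_rel_sym Q A f : symmetric (build_rel Q A f).
Proof.
move=> u v; rewrite /build_rel eq_sym; congr (_ && _).
by case: (u \in Q :|: A); case: (v \in Q :|: A); case: (v \in f u); case: (u \in f v).
Qed.

Definition build Q A f := graph_of (build_rel Q A f).

Lemma adj_build Q A f u v : adj (build Q A f) u v = build_rel Q A f u v.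
Proof. exact: adj_graph_of (@build_rel_irr Q A f) (@build_rel_sym Q A f). Qed.

Definition admissible Q A : V -> pred {set V} := fun a =>
  if a \in A then fun S : {set V} => (S \subset ~: (Q :|: A)) && (S != set0)
  else pred1 set0.

Definition wide_split G := [&& is_graph G, is_split G & 2 <= #|QS G|].

Section Construction.
Variables (Q A : {set V}) (f : {ffun V -> {set V}}).
Hypotheses (Q2 : 1 < #|Q|) (dQA : [disjoint Q & A]).
Hypothesis f_adm : f \in family (admissible Q A).
Local Notation K := (Q :|: A).
Local Notation B := (build Q A f).

Lemma f_attached a : a \in A -> f a \subset ~: K /\ f a != set0.
Proof. by move=> aA; move/familyP: f_adm => /(_ a); rewrite /admissible aA => /andP. Qed.

Lemma f_unattached a : a \notin A -> f a = set0.
Proof.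
by move=> aA; move/familyP: f_adm => /(_ a); rewrite /admissible (negbTE aA) => /eqP.
Qed.

Lemma f_outside u v : v \in f u -> u \in A /\ v \notin K.
Proof.
have [uA vf | uA] := boolP (u \in A); last by rewrite f_unattached ?inE.
by split=> //; rewrite -in_setC; apply: subsetP vf; case: (f_attached uA).
Qed.

Lemma Q_notin_A q : q \in Q -> q \notin A.
Proof. by move=> qQ; rewrite (disjointFr dQA qQ). Qed.

Lemma build_inside u v : u \in K -> v \in K -> u != v -> adj B u v.
Proof. by move=> uK vK nuv; rewrite adj_build /build_rel nuv uK vK. Qed.

Lemma build_outside u v : u \notin K -> adj B u v -> v \in A.
Proof.
move=> uK; rewrite adj_build /build_rel (negbTE uK) /=.
case/andP=> _ /orP[/f_outside[uA _] | /f_outside[//]].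
by move: uK; rewrite inE uA orbT.
Qed.

Lemma build_clique_side : clique_side B K.
Proof.
apply/clique_sideP; split=> [u v uK vK | u v uK vK]; first exact: build_inside.
by apply/negP => /(build_outside uK) vA; rewrite inE vA orbT in vK.
Qed.

Lemma build_clique_side_del q : q \in Q -> clique_side B (K :\ q).
Proof.
move=> qQ; apply: clique_side_del build_clique_side _ _; first by rewrite inE qQ.
move=> y yK; rewrite adj_sym; apply/negP => /(build_outside yK).
by rewrite (negbTE (Q_notin_A qQ)).
Qed.

(* Every clique side of B lies inside K: a vertex outside K misses all of Q, so a
   clique side containing it would leave two adjacent vertices of Q outside. *)
Lemma build_side_sub C b : clique_side B C -> b \notin K -> b \notin C.
Proof.
move=> /clique_sideP[cC iC] bK; apply/negP => bC.
have /card_gt1P[x [y [xQ yQ nxy]]] := Q2.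
have QnotC z : z \in Q -> z \notin C.
  move=> zQ; apply/negP => zC.
  have nbz : b != z by apply: contraNneq bK => ->; rewrite inE zQ.
  by have := build_outside bK (cC b z bC zC nbz); apply/negP/Q_notin_A.
by have := iC x y (QnotC x xQ) (QnotC y yQ); rewrite build_inside // inE ?xQ ?yQ.
Qed.

(* Every clique side of B contains A: each a \in A sees some vertex outside K,
   which lies on the independent side. *)
Lemma build_side_sup C a : clique_side B C -> a \in A -> a \in C.
Proof.
move=> sC aA; have [fK /set0Pn[b bf]] := f_attached aA.
have bK : b \notin K by rewrite -in_setC (subsetP fK).
apply/negPn/negP => aC; have /clique_sideP[_ iC] := sC.
have := iC a b aC (build_side_sub sC bK).
rewrite adj_build /build_rel bf orbT andbT negbK.
by apply/negP; apply: contraNneq bK => <-; rewrite inE aA orbT.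
Qed.

(* Q is the questioning set of B: each q \in Q is in K but not in K :\ q, while
   vertices outside K lie in no clique side and vertices of A in all. *)
Lemma questioning_build : QS B = Q.
Proof.
apply/setP => v; rewrite questioningE.
apply/andP/idP => [[/existsP[C1 /andP[s1 v1]] /existsP[C2 /andP[s2 v2]]] | vQ].
  have vK : v \in K by apply: contraLR v1; apply: build_side_sub s1.
  have vA : v \notin A by apply: contra v2; apply: build_side_sup s2.
  by move: vK; rewrite inE (negbTE vA) orbF.
split; apply/existsP; first by exists K; rewrite build_clique_side inE vQ.
by exists (K :\ v); rewrite build_clique_side_del // in_setD1 eqxx.
Qed.

(* A is the attached set of B: vertices of A see all of Q, others outside K
   see none of it. *)
Lemma attached_build : attached B = A.
Proof.
apply/setP => v; rewrite inE questioning_build.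
apply/andP/idP => [[vQ /existsP[q /andP[qQ avq]]] | vA].
  have [vK|vK] := boolP (v \in K); first by move: vK; rewrite inE (negbTE vQ).
  by move: (Q_notin_A qQ); rewrite (build_outside vK avq).
have vQ : v \notin Q by apply: contraL vA; apply: Q_notin_A.
have /card_gt1P[x [_ [xQ _ _]]] := Q2.
split=> //; apply/existsP; exists x; rewrite xQ build_inside ?inE ?vA ?xQ ?orbT //.
by apply: contraNneq vQ => ->.
Qed.

Lemma build_wide : wide_split B && is_clique B (QS B).
Proof.
rewrite /wide_split questioning_build Q2 andbT graph_graph_of /=; last exact: build_rel_irr.
rewrite is_splitE; apply/andP; split; first by apply/existsP; exists K; apply: build_clique_side.
by apply/cliqueP => x y xQ yQ; apply: build_inside; rewrite inE ?xQ ?yQ.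
Qed.

Lemma f_build a : a \in A -> f a = [set b | (b \notin K) && adj B a b].
Proof.
move=> aA; apply/setP => b; rewrite inE.
apply/idP/andP => [bf | [bK]].
  have [_ bK] := f_outside bf; split => //.
  rewrite adj_build /build_rel bf orbT andbT.
  by apply: contraNneq bK => <-; rewrite inE aA orbT.
rewrite adj_build /build_rel (negbTE bK) andbF /=.
by case/andP=> _ /orP[// | /f_outside[bA _]]; rewrite inE bA orbT in bK.
Qed.
End Construction.

Lemma build_inj Q A f g :
  f \in family (admissible Q A) -> g \in family (admissible Q A) ->
  build Q A f = build Q A g -> f = g.
Proof.
move=> fa ga efg; apply/ffunP => a.
have [aA|aA] := boolP (a \in A); last by rewrite (f_unattached fa aA) (f_unattached ga aA).
by rewrite (f_build fa aA) (f_build ga aA) efg.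
Qed.

Section Decomposition.
Variables (G : graph) (C : {set V}).
Hypotheses (gG : is_graph G) (sC : clique_side G C).
Hypothesis maxC : forall C', clique_side G C' -> #|C'| <= #|C|.
Hypotheses (Q2 : 1 < #|QS G|) (cQ : is_clique G (QS G)).
Local Notation Q := (QS G).
Local Notation A := (attached G).

Definition neighbours_out : {ffun V -> {set V}} :=
  [ffun a => [set b | [&& a \in A, b \notin C & adj G a b]]].

Lemma neighbours_outE u v :
  (v \in neighbours_out u) = [&& u \in A, v \notin C & adj G u v].
Proof. by rewrite ffunE inE. Qed.

Lemma Q_sub_C : Q \subset C.
Proof. exact: questioning_clique_sub. Qed.

Lemma Q_loose x : x \in Q -> x \in loose G C.
Proof. by move=> xQ; apply: questioning_in_loose => //; apply: (subsetP Q_sub_C). Qed.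

(* The attached vertices are the non-questioning vertices of C: each sees
   a vertex of Q inside the clique C, while vertices outside C miss the loose
   vertices of Q. *)
Lemma attached_eq : A = C :\: Q.
Proof.
apply/setP => v; rewrite inE in_setD; have [vQ|vQ] //= := boolP (v \in Q).
have /card_gt1P[x [_ [xQ _ _]]] := Q2.
have [vC|vC] := boolP (v \in C).
  apply/existsP; exists x; rewrite xQ; have /clique_sideP[cC _] := sC.
  by apply: cC => //; [apply: (subsetP Q_sub_C) | apply: contraNneq vQ => ->].
apply/existsP => -[q /andP[qQ avq]]; have /looseP[_ ql] := Q_loose qQ.
by have := ql v vC; rewrite adj_sym avq.
Qed.

Lemma QA_eq : Q :|: A = C.
Proof.
apply/setP => v; rewrite attached_eq in_setU in_setD.
by case vQ: (v \in Q); rewrite //= (subsetP Q_sub_C).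
Qed.

(* neighbours_out is admissible: an attached vertex is not loose, so it has a
   neighbour outside C. *)
Lemma neighbours_out_adm : neighbours_out \in family (admissible Q A).
Proof.
apply/familyP => a; rewrite /admissible; case: ifP => aA; rewrite /in_mem /=; last first.
  by apply/eqP/setP => b; rewrite neighbours_outE aA inE.
rewrite QA_eq; apply/andP; split.
  by apply/subsetP => b; rewrite neighbours_outE in_setC => /and3P[_ bC _].
move: aA; rewrite attached_eq in_setD => /andP[aQ aC].
have : a \notin loose G C by apply: contra aQ; apply: (subsetP (loose_questioning sC)).
rewrite inE aC negb_forall => /existsP[b]; rewrite negb_imply negbK => /andP[bC ab].
by apply/set0Pn; exists b; rewrite neighbours_outE attached_eq in_setD aQ aC bC ab.
Qed.

(* Across the cut (C, ~: C) the graph is recorded by neighbours_out, since the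
   vertices of Q are loose. *)
Lemma adj_across u v : u \in C -> v \notin C -> adj G u v = (v \in neighbours_out u).
Proof.
move=> uC vC; rewrite neighbours_outE vC /= attached_eq in_setD uC andbT.
have [uQ|//] := boolP (u \in Q); have /looseP[_ ul] := Q_loose uQ.
by rewrite (negbTE (ul v vC)).
Qed.

Lemma build_decomposition : G = build Q A neighbours_out.
Proof.
apply: graph_ext => //; first exact/graph_graph_of/build_rel_irr.
move=> u v; rewrite adj_build /build_rel QA_eq.
have outC w w' : w \notin C -> (w' \in neighbours_out w) = false.
  by move=> wC; rewrite neighbours_outE attached_eq in_setD (negbTE wC) andbF.
have /clique_sideP[cC iC] := sC.
have [uC|uC] := boolP (u \in C); have [vC|vC] := boolP (v \in C) => /=.
- by rewrite andbT; apply/idP/idP; [exact: adj_neq | exact: cC].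
- rewrite (outC v u vC) orbF -adj_across //.
  by apply/idP/andP => [a|[]//]; rewrite (adj_neq a).
- rewrite (outC u v uC) /= adj_sym -adj_across //.
  by apply/idP/andP => [a|[]//]; rewrite eq_sym (adj_neq a).
- by rewrite (outC u v uC) (outC v u vC) andbF (negbTE (iC u v uC vC)).
Qed.
End Decomposition.

Definition wide_clique := [set G | wide_split G && is_clique G (QS G)].
Definition wide_indep := [set G | wide_split G && is_indep G (QS G)].

Lemma wide_cover : [set G | wide_split G] = wide_clique :|: wide_indep.
Proof.
apply/setP => G; rewrite !inE -andb_orr.
case wG: (wide_split G) => //=.
by case/and3P: wG => _ /questioning_clique_or_indep ->.
Qed.

Lemma wide_disjoint : [disjoint wide_clique & wide_indep].
Proof.
rewrite -setI_eq0; apply/eqP/setP => G; rewrite !inE.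
apply/negP => /andP[/andP[/and3P[_ _ Q2] /cliqueP cQ] /andP[_ /indepP iQ]].
have /card_gt1P[x [y [xQ yQ nxy]]] := Q2.
by have := iQ x y xQ yQ; rewrite cQ.
Qed.

Lemma wide_indep_compl : wide_indep = compl @: wide_clique.
Proof.
apply/setP => G; apply/idP/imsetP => [|[H]].
  rewrite inE => /andP[/and3P[gG sG Q2] iQ]; exists (compl G); last by rewrite complK.
  by rewrite !inE /wide_split graph_compl split_compl questioning_compl sG Q2 clique_compl.
rewrite !inE => /andP[/and3P[gH sH Q2] cH] ->.
by rewrite /wide_split graph_compl split_compl questioning_compl Q2 sH indep_compl.
Qed.

Lemma card_wide : #|[set G | wide_split G]| = 2 * #|wide_clique|.
Proof.
have compl_inj : {in wide_clique &, injective compl}.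
  move=> G H; rewrite !inE => /andP[/and3P[gG _ _] _] /andP[/and3P[gH _ _] _] eGH.
  by rewrite -(complK gG) eGH complK.
rewrite wide_cover cardsU (disjoint_setI0 wide_disjoint) cards0 subn0.
by rewrite wide_indep_compl (card_in_imset compl_inj) addnn mul2n.
Qed.

Lemma card_admissible Q A :
  #|family (admissible Q A)| = (2 ^ #|~: (Q :|: A)| - 1) ^ #|A|.
Proof.
rewrite card_family foldrE big_map big_enum /= (bigID (mem A)) /=.
rewrite -[RHS]muln1 -prod_nat_const; congr (_ * _).
  by apply: eq_bigr => a aA; rewrite /admissible aA card_nonempty_subsets.
apply: big1 => a aA; rewrite /admissible (negbTE aA).
by apply: eq_card1.
Qed.

Definition fiber Q A := [set G in wide_clique | (QS G, attached G) == (Q, A)].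

Lemma fiber_build Q A : 1 < #|Q| -> [disjoint Q & A] ->
  fiber Q A = build Q A @: family (admissible Q A).
Proof.
move=> Q2 dQA; apply/setP => G; apply/idP/imsetP.
  rewrite !inE => /andP[/andP[/and3P[gG sG QG2] cQ] /eqP[<- <-]].
  have [C sC maxC] := max_clique_side sG.
  exists (neighbours_out G C); first exact: neighbours_out_adm sC maxC QG2 cQ.
  exact: build_decomposition gG sC maxC QG2 cQ.
case=> f fa ->; rewrite !inE build_wide //=.
by rewrite questioning_build ?attached_build.
Qed.

Lemma fiber_empty Q A : ~~ ((1 < #|Q|) && [disjoint Q & A]) -> fiber Q A = set0.
Proof.
move=> bad; apply/setP => G; rewrite !inE; apply/negP.
case/andP=> /andP[/and3P[_ _ Q2] _] /eqP[eQ eA].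
move: bad; rewrite -eQ -eA Q2 /= disjoints_subset => /negP; apply.
by apply/subsetP => v vQ; rewrite in_setC /attached in_set vQ.
Qed.

Lemma card_fiber Q A : #|fiber Q A| =
  if (1 < #|Q|) && [disjoint Q & A] then (2 ^ #|~: (Q :|: A)| - 1) ^ #|A| else 0.
Proof.
case: ifP => [/andP[Q2 dQA] | /negbT bad]; last by rewrite fiber_empty ?cards0.
rewrite fiber_build // card_in_imset ?card_admissible //.
by move=> f g; apply: build_inj.
Qed.

Lemma card_wide_clique : #|wide_clique| = \sum_(Q : {set V}) \sum_(A : {set V})
  (if (1 < #|Q|) && [disjoint Q & A] then (2 ^ #|~: (Q :|: A)| - 1) ^ #|A| else 0).
Proof.
rewrite -sum1_card (partition_big (fun G => (QS G, attached G)) predT) //=.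
rewrite pair_big /=; apply: eq_bigr => -[Q A] _ /=.
by rewrite -(card_fiber Q A) -sum1_card; apply: eq_bigl => G; rewrite /fiber in_set.
Qed.
End SplitGraphs.

Lemma sum_attached n (Q : {set 'I_n}) :
  \sum_(A : {set 'I_n})
    (if [disjoint Q & A] then (2 ^ #|~: (Q :|: A)| - 1) ^ #|A| else 0)
  = \sum_(c < (n - #|Q|).+1) 'C(n - #|Q|, c) * (2 ^ (n - c - #|Q|) - 1) ^ c.
Proof.
have cardC (X : {set 'I_n}) : #|~: X| = n - #|X| by rewrite cardsCs setCK card_ord.
rewrite -big_mkcond /= -cardC -(sum_subsets _ (fun c => (2 ^ (n - c - #|Q|) - 1) ^ c)).
apply: eq_big => [A | A]; first by rewrite disjoint_sym disjoints_subset.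
by move=> dQA; rewrite cardC cardsU (disjoint_setI0 dQA) cards0 subn0 subnDA subnAC.
Qed.

Lemma sum_split_data n :
  \sum_(Q : {set 'I_n}) \sum_(A : {set 'I_n})
    (if (1 < #|Q|) && [disjoint Q & A] then (2 ^ #|~: (Q :|: A)| - 1) ^ #|A| else 0)
  = \sum_(2 <= q < n.+1) \sum_(0 <= c < (n - q).+1)
      'C(n, q) * 'C(n - q, c) * (2 ^ (n - c - q) - 1) ^ c.
Proof.
pose g q := if 1 < q then
  \sum_(c < (n - q).+1) 'C(n - q, c) * (2 ^ (n - c - q) - 1) ^ c else 0.
transitivity (\sum_(Q : {set 'I_n} | Q \subset setT) g #|Q|).
  apply: eq_big => [Q | Q _]; first by rewrite subsetT.
  rewrite /g; case: ifP => Q2; last by rewrite big1.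
  exact: sum_attached.
rewrite sum_subsets cardsT card_ord big_geq_mkord [RHS]big_mkcond.
apply: eq_bigr => q _; rewrite /g; case: ifP => q2; last by rewrite muln0.
by rewrite big_mkord big_distrr; apply: eq_bigr => c _; rewrite /= mulnA.
Qed.

Theorem lemma8p6 (n : nat) :
  #|[set G : {set {set 'I_n}} |
      [&& is_graph G, is_split G & 2 <= #|questioning_set G|]]|
  = 2 * \sum_(2 <= q < n.+1) \sum_(0 <= c < (n - q).+1)
          'C(n, q) * 'C(n - q, c) * (2 ^ (n - c - q) - 1) ^ c.
Proof. by rewrite (card_wide n) card_wide_clique sum_split_data. Qed.
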